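(* Let $k\geq 2$, let $\mathbb Z_0=\mathbb Z\setminus\{0\}$ and let $\{\lambda_j\}_{j\in\mathbb Z_0}$ be positive numbers. If there are sequences of positive numbers $z=\{z_j\}_{j\in\mathbb Z_0}$, $\tilde z=\{\tilde z_j\}_{j\in\mathbb Z_0}$ satisfying $$z_i=\lambda_i\Bigl(\frac{1}{1+\sum_{j\in\mathbb Z_0}\tilde z_j}\Bigr)^{k},\qquad \tilde z_i=\lambda_i\Bigl(\frac{1}{1+\sum_{j\in\mathbb Z_0}z_j}\Bigr)^{k},\qquad i\in\mathbb Z_0,$$ then the series $\sum_{j\in\mathbb Z_0}z_j$, $\sum_{j\in\mathbb Z_0}\tilde z_j$ and $\sum_{j\in\mathbb Z_0}\lambda_j$ all converge.
   Context: If one of the sums $\sum_j z_j$, $\sum_j\tilde z_j$ is $+\infty$, the corresponding right-hand side is interpreted as $0$. *)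

From mathcomp Require Import all_boot all_order all_algebra.
From mathcomp Require Import all_classical all_reals all_analysis.
Set Implicit Arguments. Unset Strict Implicit. Unset Printing Implicit Defensive.
Import Order.TTheory GRing.Theory Num.Theory.
Local Open Scope classical_set_scope.
Local Open Scope ring_scope.

Definition Zne0 : set int := [set j : int | j != 0].

(* (1/(1+S))^k for S in [0,+oo]; interpreted as 0 when S = +oo
   (convention from the paper); S = -oo never occurs for nonnegative sums. *)
Definition recip_pow (R : realType) (S : \bar R) (k : nat) : R :=
  match S with
  | EFin s => (1 / (1 + s)) ^+ k
  | _ => 0
  end.

From mathcomp Require Import all_boot all_order all_algebra.
From mathcomp Require Import all_classical all_reals all_analysis.
Set Implicit Arguments. Unset Strict Implicit. Unset Printing Implicit Defensive.
Import Order.TTheory GRing.Theory Num.Theory.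
Local Open Scope classical_set_scope.
Local Open Scope ring_scope.

(* Since z_1 and lambda_1 are positive, the factor (1 + sum zt)^-k is nonzero,
   so sum zt is finite (an infinite sum would make the factor 0); symmetrically
   sum z is finite.  Then lambda_i = (1 + sum zt)^k z_i for every i, so sum lambda
   is a constant multiple of sum z. *)

Lemma esumZl (R : realType) (T : choiceType) (I : set T) (a : T -> \bar R) (r : R) :
  0 < r -> (forall i, I i -> (0 <= a i)%E) ->
  \esum_(i in I) (r%:E * a i)%E = (r%:E * \esum_(i in I) a i)%E.
Proof.
move=> r_gt0 a_ge0; rewrite /esum -ereal_sup_pZl // image_comp.
congr ereal_sup; apply: eq_imagel => A [finA AI] /=.
rewrite !fsbig_finite //= big_seq [in RHS]big_seq ge0_sume_distrr // => i.
by rewrite in_fset_set // inE => /AI; apply: a_ge0.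
Qed.

Lemma recip_pow_neq0_lty (R : realType) (S : \bar R) (k : nat) :
  recip_pow S k != 0 -> (S < +oo)%E.
Proof. by case: S => [s _|/=|//]; [exact: ltry|rewrite eqxx]. Qed.

Theorem mainTheorem4 (R : realType) (k : nat) (hk : (2 <= k)%N)
  (lam z zt : int -> R)
  (hlam : forall j, j != 0 -> 0 < lam j)
  (hz : forall j, j != 0 -> 0 < z j)
  (hzt : forall j, j != 0 -> 0 < zt j)
  (eqz : forall i, i != 0 ->
     z i = lam i * recip_pow (\esum_(j in Zne0) (zt j)%:E) k)
  (eqzt : forall i, i != 0 ->
     zt i = lam i * recip_pow (\esum_(j in Zne0) (z j)%:E) k) :
  ((\esum_(j in Zne0) (z j)%:E < +oo)%E /\
   (\esum_(j in Zne0) (zt j)%:E < +oo)%E /\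
   (\esum_(j in Zne0) (lam j)%:E < +oo)%E).
Proof.
set S := \esum_(j in Zne0) (z j)%:E in eqzt *.
set T := \esum_(j in Zne0) (zt j)%:E in eqz *.
have one_neq0 : (1 : int) != 0 by [].
have cS_gt0 : 0 < recip_pow S k.
  by have := hzt 1 one_neq0; rewrite eqzt // pmulr_rgt0 // hlam.
have cT_gt0 : 0 < recip_pow T k.
  by have := hz 1 one_neq0; rewrite eqz // pmulr_rgt0 // hlam.
have S_lty := recip_pow_neq0_lty (lt0r_neq0 cS_gt0).
have T_lty := recip_pow_neq0_lty (lt0r_neq0 cT_gt0).
have lamE : \esum_(j in Zne0) (lam j)%:E = ((recip_pow T k)^-1%:E * S)%E.
  rewrite -esumZl ?invr_gt0 // => [|j Zj]; last by rewrite lee_fin ltW ?hz.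
  apply: eq_esum => j Zj; rewrite -EFinM eqz // mulrCA mulVf ?mulr1 //.
  exact: lt0r_neq0.
split=> //; split=> //.
by rewrite lamE lte_mul_pinfty // lee_fin invr_ge0 ltW.
Qed.
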